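(* Let $A\in\mathbb R^{m\times n}$, $W\in\mathbb R^{k\times n}$ and $\alpha>0$. For $y\in\mathbb R^m$ let $\hat x(y)\subset\mathbb R^n$ be the set of minimizers of $x\mapsto\|Ax-y\|_2^2+\alpha\|Wx\|_1$. Then the set-valued map $y\mapsto\hat x(y)$ is Hausdorff Lipschitz continuous: there exists $\kappa>0$ such that $$\hat x(\tilde y)\subset\hat x(y)+\kappa\|y-\tilde y\|_2\,B_1(0)\qquad\text{for all }y,\tilde y\in\mathbb R^m.$$
   Context: $B_1(0)$ denotes the closed Euclidean unit ball in $\mathbb R^n$; $\|\cdot\|_1$ and $\|\cdot\|_2$ denote the $\ell^1$- and Euclidean norms. *)

From HB Require Import structures.
From mathcomp Require Import all_boot all_order all_algebra.
From mathcomp Require Import reals.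
Set Implicit Arguments. Unset Strict Implicit. Unset Printing Implicit Defensive.
Import Order.TTheory GRing.Theory Num.Theory.
Local Open Scope ring_scope.

Definition norm1 (R : realType) (p : nat) (v : 'cV[R]_p) : R :=
  \sum_(i < p) `|v i 0|.

Definition norm2 (R : realType) (p : nat) (v : 'cV[R]_p) : R :=
  Num.sqrt (\sum_(i < p) (v i 0) ^+ 2).

Definition objective (R : realType) (m n k : nat) (A : 'M[R]_(m, n))
  (W : 'M[R]_(k, n)) (alpha : R) (y : 'cV[R]_m) (x : 'cV[R]_n) : R :=
  norm2 (A *m x - y) ^+ 2 + alpha * norm1 (W *m x).

Definition minimizers (R : realType) (m n k : nat) (A : 'M[R]_(m, n))
  (W : 'M[R]_(k, n)) (alpha : R) (y : 'cV[R]_m) (x : 'cV[R]_n) : Prop :=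
  forall z : 'cV[R]_n, objective A W alpha y x <= objective A W alpha y z.

From HB Require Import structures.
From mathcomp Require Import all_boot all_order all_algebra.
From mathcomp Require Import reals.
From mathcomp Require Import classical_sets ring lra.
Import Order.TTheory GRing.Theory Num.Theory.
Local Open Scope ring_scope.

Set Implicit Arguments. Unset Strict Implicit. Unset Printing Implicit Defensive.

(* The objective is strongly convex in [A x]: testing two minimizers [x], [x']
   for data [y], [y'] against the midpoint of [x] and [x'] gives
   [|A x - A x'| <= 2 |y - y'|].  Hence, if [xs] minimizes for [y], the
   minimizers for [y] form the polyhedron
   [{x | A x = A xs, ||W x||_1 <= ||W xs||_1}], a system of linear inequalities
   whose normals range over a fixed finite set.  A minimizer [xt] for [yt]
   violates this system by O(|y - yt|): its image is close to [A xs], and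
   comparing [xt] with [xs + d], where [d] is a short vector with
   [A d = A (xt - xs)], bounds the excess of [||W xt||_1].  Hoffman's error
   bound, proved by Fourier-Motzkin elimination, then provides a minimizer for
   [y] within O(|y - yt|) of [xt].
   Hoffman's bound only assumes approximate feasibility, so it also yields the
   existence of minimizers: the images of a minimizing sequence converge to some
   [p], and the corresponding level polyhedron is approximately feasible. *)

Section Hoffman.
Variable R : realFieldType.
Local Notation vec n := 'cV[R]_n.

Lemma entryB p (u v : vec p) i : (u - v) i 0 = u i 0 - v i 0.
Proof. by rewrite !mxE. Qed.

Definition dot n (a x : vec n) : R := \sum_i a i 0 * x i 0.

Lemma dotDl n (a b x : vec n) : dot (a + b) x = dot a x + dot b x.
Proof. by rewrite /dot -big_split; apply: eq_bigr => i _; rewrite mxE mulrDl. Qed.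

Lemma dotZl n r (a x : vec n) : dot (r *: a) x = r * dot a x.
Proof. by rewrite /dot mulr_sumr; apply: eq_bigr => i _; rewrite mxE mulrA. Qed.

Lemma dotNl n (a x : vec n) : dot (- a) x = - dot a x.
Proof. by rewrite /dot -sumrN; apply: eq_bigr => i _; rewrite mxE mulNr. Qed.

Lemma dotBr n (a x y : vec n) : dot a (x - y) = dot a x - dot a y.
Proof. by rewrite /dot -sumrB; apply: eq_bigr => i _; rewrite !mxE mulrBr. Qed.

Lemma norm_dot_le n (a v : vec n) B : (forall j, `|v j 0| <= B) ->
  `|dot a v| <= (\sum_i `|a i 0|) * B.
Proof.
move=> vB; rewrite /dot mulr_suml; apply: le_trans (ler_norm_sum _ _ _) _.
by apply: ler_sum => i _; rewrite normrM ler_wpM2l.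
Qed.

Lemma ler_sum_mem (T : eqType) (s : seq T) (F : T -> R) x :
  (forall y, 0 <= F y) -> x \in s -> F x <= \sum_(y <- s) F y.
Proof. by move=> F0 xs; rewrite (big_rem _ xs) /= lerDl sumr_ge0. Qed.

Lemma near_point_between (Ls Us : seq R) (t0 r : R) : 0 <= r ->
  {in Ls & Us, forall l u, l <= u} ->
  {in Ls, forall l, l <= t0 + r} -> {in Us, forall u, t0 - r <= u} ->
  exists t, [/\ {in Ls, forall l, l <= t}, {in Us, forall u, t <= u}
              & `|t - t0| <= r].
Proof.
move=> r0 LU Lr Ur.
pose tU := \big[Order.min/t0]_(u <- Us | u \in Us) u.
pose t := \big[Order.max/tU]_(l <- Ls | l \in Ls) l.
exists t; split.
- by move=> l Ll; apply: le_bigmax_seq.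
- move=> u Uu; apply: bigmax_le => [|l Ll]; last exact: LU.
  exact: ge_bigmin_seq.
- rewrite ler_distl; apply/andP; split.
    apply: le_trans (bigmax_ge_id _ _ _ _); apply: le_bigmin => //.
    by rewrite lerBlDr lerDl.
  apply: bigmax_le => //; apply: le_trans (bigmin_le_id _ _ _ _) _.
  by rewrite lerDl.
Qed.

Definition solves n (cs : seq (vec n * R)) (x : vec n) (e : R) :=
  forall c, c \in cs -> dot c.1 x <= c.2 + e.

Lemma solves_le n (cs : seq (vec n * R)) x e e' : e <= e' ->
  solves cs x e -> solves cs x e'.
Proof. by move=> ee' xe c /xe /le_trans; apply; rewrite lerD2l. Qed.

Definition hd n (a : vec n.+1) : R := a ord0 0.
Definition tl n (a : vec n.+1) : vec n := \col_i a (lift ord0 i) 0.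
Definition vcons n (t : R) (x : vec n) : vec n.+1 :=
  \col_i oapp (fun j => x j 0) t (unlift ord0 i).

Lemma hd_vcons n t (x : vec n) : hd (vcons t x) = t.
Proof. by rewrite /hd mxE unlift_none. Qed.

Lemma tl_vcons n t (x : vec n) : tl (vcons t x) = x.
Proof. by apply/matrixP => i j; rewrite !mxE liftK (ord1 j). Qed.

Lemma dot_split n (a x : vec n.+1) : dot a x = hd a * hd x + dot (tl a) (tl x).
Proof.
by rewrite /dot big_ord_recl; congr (_ + _); apply: eq_bigr => i _; rewrite !mxE.
Qed.

Lemma sum_norm_tl n (a : vec n.+1) : \sum_i `|tl a i 0| <= \sum_i `|a i 0|.
Proof.
rewrite [leRHS]big_ord_recl; apply: ler_wpDl => //.
by apply: ler_sum => i _; rewrite mxE.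
Qed.

(** Fourier-Motzkin elimination of the first coordinate: constraints with a
    zero first coefficient are kept, and every pair of constraints with
    first coefficients of opposite signs is combined so as to cancel it. *)
Definition comb n (a b : vec n.+1) : vec n :=
  (hd a)^-1 *: tl a + (- hd b)^-1 *: tl b.

Definition fm_dirs n (dirs : seq (vec n.+1)) : seq (vec n) :=
  [seq tl a | a <- dirs & hd a == 0] ++
  [seq comb a b | a <- [seq a <- dirs | 0 < hd a], b <- [seq b <- dirs | hd b < 0]].

Definition fm_elim n (cs : seq (vec n.+1 * R)) : seq (vec n * R) :=
  [seq (tl c.1, c.2) | c <- cs & hd c.1 == 0] ++
  [seq (comb c.1 d.1, c.2 / hd c.1 + d.2 / (- hd d.1)) |
     c <- [seq c <- cs | 0 < hd c.1], d <- [seq d <- cs | hd d.1 < 0]].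

Lemma fm_elimP n (cs : seq (vec n.+1 * R)) c' : c' \in fm_elim cs ->
  (exists2 c, c \in cs & hd c.1 = 0 /\ c' = (tl c.1, c.2)) \/
  (exists c d, [/\ c \in cs, d \in cs, 0 < hd c.1, hd d.1 < 0 &
     c' = (comb c.1 d.1, c.2 / hd c.1 + d.2 / (- hd d.1))]).
Proof.
rewrite mem_cat => /orP [/mapP [c]|/allpairsP [[c d] [/= + + ->]]].
  by rewrite mem_filter => /andP [/eqP c0 cs_c] ->; left; exists c.
by rewrite !mem_filter => /andP [cpos cs_c] /andP [dneg cs_d]; right; exists c, d.
Qed.

Lemma fm_dirs_sub n (dirs : seq (vec n.+1)) cs :
  (forall c, c \in cs -> c.1 \in dirs) ->
  forall c', c' \in fm_elim cs -> c'.1 \in fm_dirs dirs.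
Proof.
move=> csD c' /fm_elimP [[c cs_c [c0 ->]]|[c [d [cs_c cs_d cpos dneg ->]]]].
  by rewrite /= mem_cat map_f // mem_filter c0 eqxx csD.
rewrite mem_cat; apply/orP; right; apply/allpairsP; exists (c.1, d.1).
by rewrite !mem_filter cpos dneg !csD.
Qed.

Lemma fm_elim_zero n (cs : seq (vec n.+1 * R)) c : c \in cs -> hd c.1 = 0 ->
  (tl c.1, c.2) \in fm_elim cs.
Proof. by move=> cs_c c0; rewrite mem_cat map_f // mem_filter c0 eqxx. Qed.

Lemma fm_elim_pair n (cs : seq (vec n.+1 * R)) c d : c \in cs -> d \in cs ->
  0 < hd c.1 -> hd d.1 < 0 ->
  (comb c.1 d.1, c.2 / hd c.1 + d.2 / (- hd d.1)) \in fm_elim cs.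
Proof.
move=> cs_c cs_d cpos dneg; rewrite mem_cat; apply/orP; right.
by apply/allpairsP; exists (c, d); rewrite !mem_filter cpos dneg cs_c cs_d.
Qed.

Lemma dot_comb n (a b : vec n.+1) x :
  dot (comb a b) x = (hd a)^-1 * dot (tl a) x + (- hd b)^-1 * dot (tl b) x.
Proof. by rewrite /comb dotDl !dotZl. Qed.

Lemma solves_fm_elim n (cs : seq (vec n.+1 * R)) x e M : 0 <= e ->
  (forall c, c \in cs -> `|hd c.1|^-1 <= M) ->
  solves cs x e -> solves (fm_elim cs) (tl x) ((2 * M + 1) * e).
Proof.
move=> e0 csM xe c' /fm_elimP [[c cs_c [c0 ->]]|[c [d [cs_c cs_d cpos dneg ->]]]] /=.
  have M0 : 0 <= M by apply: le_trans (csM _ cs_c); rewrite invr_ge0.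
  by have := xe _ cs_c; rewrite dot_split c0 mul0r add0r; nra.
have := csM _ cs_c; have := csM _ cs_d.
rewrite (gtr0_norm cpos) (ltr0_norm dneg) dot_comb => Mb Ma.
have := xe _ cs_c; have := xe _ cs_d; rewrite !dot_split.
set ia := (hd c.1)^-1 in Ma *; set ib := (- hd d.1)^-1 in Mb *.
have ia0 : 0 < ia by rewrite invr_gt0.
have ib0 : 0 < ib by rewrite invr_gt0 oppr_gt0.
have iaK : ia * hd c.1 = 1 by rewrite mulVf // gt_eqF.
have ibK : ib * hd d.1 = -1 by rewrite /ib invrN mulNr mulVf ?lt_eqF.
move=> /(ler_wpM2l (ltW ib0)) hd' /(ler_wpM2l (ltW ia0)) hc.
have := ler_wpM2r e0 Ma; have := ler_wpM2r e0 Mb.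
rewrite !mulrDr !mulrA iaK ibK mulN1r mul1r in hc hd' *.
lra.
Qed.

Lemma solves_fm_lift n (cs : seq (vec n.+1 * R)) (x : vec n) t0 r : 0 <= r ->
  solves (fm_elim cs) x 0 ->
  (forall c, c \in cs -> hd c.1 != 0 ->
     hd c.1 * t0 + dot (tl c.1) x <= c.2 + `|hd c.1| * r) ->
  exists t, solves cs (vcons t x) 0 /\ `|t - t0| <= r.
Proof.
move=> r0 xsol t0_near.
pose Ls := [seq (dot (tl c.1) x - c.2) / (- hd c.1) | c <- cs & hd c.1 < 0].
pose Us := [seq (c.2 - dot (tl c.1) x) / hd c.1 | c <- cs & 0 < hd c.1].
have [||| t [Lt Ut tt0]] := @near_point_between Ls Us t0 r r0.
- move=> _ _ /mapP [d + ->] /mapP [c + ->].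
  rewrite !mem_filter => /andP [dneg cs_d] /andP [cpos cs_c].
  have := xsol _ (fm_elim_pair cs_c cs_d cpos dneg); rewrite /= dot_comb addr0.
  set ia := (hd c.1)^-1; set ib := (- hd d.1)^-1; lra.
- move=> _ /mapP [c + ->]; rewrite mem_filter => /andP [cneg cs_c].
  have := t0_near _ cs_c (ltr0_neq0 cneg).
  by rewrite ltr0_norm // ler_pdivrMr ?oppr_gt0 //; lra.
- move=> _ /mapP [c + ->]; rewrite mem_filter => /andP [cpos cs_c].
  have := t0_near _ cs_c (lt0r_neq0 cpos).
  by rewrite gtr0_norm // ler_pdivlMr //; lra.
exists t; split => // c cs_c; rewrite dot_split hd_vcons tl_vcons addr0.
case: (ltgtP (hd c.1) 0) => c0.
- have /Lt : (dot (tl c.1) x - c.2) / (- hd c.1) \in Ls.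
    by apply: map_f; rewrite mem_filter c0.
  by rewrite ler_pdivrMr ?oppr_gt0 //; lra.
- have /Ut : (c.2 - dot (tl c.1) x) / hd c.1 \in Us.
    by apply: map_f; rewrite mem_filter c0.
  by rewrite ler_pdivlMr //; lra.
- by have := xsol _ (fm_elim_zero cs_c c0); rewrite c0 mul0r add0r addr0.
Qed.

Lemma solves_near_tl n (cs : seq (vec n.+1 * R)) (x0 : vec n.+1) (x : vec n)
    e B M N : 0 <= e -> 0 <= B ->
  (forall c, c \in cs -> `|hd c.1|^-1 <= M) ->
  (forall c, c \in cs -> \sum_i `|tl c.1 i 0| <= N) ->
  solves cs x0 e -> (forall j, `|x j 0 - tl x0 j 0| <= B) ->
  forall c, c \in cs -> hd c.1 != 0 ->
    hd c.1 * hd x0 + dot (tl c.1) x <= c.2 + `|hd c.1| * ((e + N * B) * M).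
Proof.
move=> e0 B0 csM csN x0e xB c cs_c c0.
have N0 : 0 <= N by apply: le_trans (csN _ cs_c); apply: sumr_ge0.
have := x0e _ cs_c; rewrite dot_split => x0c.
have xc : dot (tl c.1) x - dot (tl c.1) (tl x0) <= N * B.
  rewrite -dotBr; apply: le_trans (ler_norm _) _.
  apply: le_trans (norm_dot_le _ (B := B) _) _; first by move=> j; rewrite entryB.
  by rewrite ler_wpM2r ?csN.
have cM : 1 <= `|hd c.1| * M by rewrite -ler_pdivrMl ?normr_gt0 // mulr1 csM.
have := ler_wpM2r (addr_ge0 e0 (mulr_ge0 N0 B0)) cM; rewrite mul1r mulrA.
by lra.
Qed.

Lemma fm_elim_approx n (cs : seq (vec n.+1 * R)) M :
  (forall c, c \in cs -> `|hd c.1|^-1 <= M) ->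
  (forall e, 0 < e -> exists x, solves cs x e) ->
  forall e, 0 < e -> exists x, solves (fm_elim cs) x e.
Proof.
move=> csM feas e e0.
have csM' c : c \in cs -> `|hd c.1|^-1 <= `|M|.
  by move=> /csM /le_trans; apply; apply: ler_norm.
have M1 : 0 < 2 * `|M| + 1 by rewrite ltr_pwDr ?mulr_ge0.
have [x xe] := feas (e / (2 * `|M| + 1)) (divr_gt0 e0 M1).
exists (tl x); have := solves_fm_elim (ltW (divr_gt0 e0 M1)) csM' xe.
by rewrite mulrC divfK // gt_eqF.
Qed.

Lemma solves_dim0 (cs : seq (vec 0 * R)) x :
  (forall e, 0 < e -> exists x, solves cs x e) -> solves cs x 0.
Proof.
have dot0 (a y : vec 0) : dot a y = 0 by rewrite /dot big_ord0.
move=> feas c cs_c; rewrite addr0 dot0; apply/ler_addgt0Pr => e e0.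
by have [y /(_ _ cs_c)] := feas _ e0; rewrite dot0.
Qed.

Lemma solves_approx n (cs : seq (vec n * R)) x : solves cs x 0 ->
  forall e, 0 < e -> exists z, solves cs z e.
Proof. by move=> xsol e e0; exists x; apply: solves_le xsol; apply: ltW. Qed.

Theorem hoffman_bound n (dirs : seq (vec n)) : exists K : R, 0 <= K /\
  forall cs : seq (vec n * R), (forall c, c \in cs -> c.1 \in dirs) ->
  (forall e, 0 < e -> exists x, solves cs x e) ->
  forall (x0 : vec n) e, 0 <= e -> solves cs x0 e ->
  exists x, solves cs x 0 /\ forall i, `|x i 0 - x0 i 0| <= K * e.
Proof.
elim: n dirs => [|n IH] dirs.
  exists 0; split => // cs _ feas x0 e _ _; exists x0.
  by split; [apply: solves_dim0|move=> i; rewrite subrr normr0 mul0r].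
have [K' [K'0 HK']] := IH (fm_dirs dirs).
pose M := \sum_(a <- dirs) `|hd a|^-1.
pose N := \sum_(a <- dirs) \sum_i `|a i 0|.
pose L := K' * (2 * M + 1).
have M0 : 0 <= M by apply: sumr_ge0 => a _; rewrite invr_ge0.
have N0 : 0 <= N by apply: sumr_ge0 => a _; apply: sumr_ge0.
have M1 : 0 < 2 * M + 1 by lra.
have L0 : 0 <= L by rewrite mulr_ge0 // ltW.
exists (L + (1 + N * L) * M); split.
  by rewrite addr_ge0 // mulr_ge0 // addr_ge0 // mulr_ge0.
move=> cs csD feas x0 e e0 x0e.
have csM c : c \in cs -> `|hd c.1|^-1 <= M.
  by move=> /csD; apply: ler_sum_mem => a; rewrite invr_ge0.
have csN c : c \in cs -> \sum_i `|tl c.1 i 0| <= N.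
  move=> /csD cD; apply: le_trans (sum_norm_tl _) _.
  by apply: (ler_sum_mem (F := fun a : vec n.+1 => \sum_i `|a i 0|)) => // a;
    apply: sumr_ge0.
have [x1 [x1sol x1near]] := HK' _ (fm_dirs_sub csD) (fm_elim_approx csM feas)
  (tl x0) _ (mulr_ge0 (ltW M1) e0) (solves_fm_elim e0 csM x0e).
have x1near' j : `|x1 j 0 - tl x0 j 0| <= L * e by rewrite -mulrA x1near.
have [|||t [tsol tnear]] :=
  @solves_fm_lift _ cs x1 (hd x0) ((e + N * (L * e)) * M).
- exact: mulr_ge0 (addr_ge0 e0 (mulr_ge0 N0 (mulr_ge0 L0 e0))) M0.
- exact: x1sol.
- exact: solves_near_tl e0 (mulr_ge0 L0 e0) csM csN x0e x1near'.
exists (vcons t x1); split => // i; case: (unliftP ord0 i) => [j ->|->].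
  rewrite mxE liftK; have := x1near' j; rewrite mxE => /le_trans; apply.
  by rewrite ler_wpM2r // lerDl !mulr_ge0 // addr_ge0 // mulr_ge0.
rewrite mxE unlift_none /= -[x0 _ _]/(hd x0); apply: (le_trans tnear).
have -> : (e + N * (L * e)) * M = (1 + N * L) * M * e by ring.
by rewrite (mulrDl L) lerDr mulr_ge0.
Qed.

End Hoffman.

Section Norms.
Variable R : realType.
Local Notation vec n := 'cV[R]_n.

Definition sqnorm2 p (v : vec p) : R := \sum_i v i 0 ^+ 2.

Lemma sqnorm2_ge0 p (v : vec p) : 0 <= sqnorm2 v.
Proof. by apply: sumr_ge0 => i _; apply: sqr_ge0. Qed.

Lemma norm2_sqr p (v : vec p) : norm2 v ^+ 2 = sqnorm2 v.
Proof. by rewrite /norm2 sqr_sqrtr // sqnorm2_ge0. Qed.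

Lemma norm2_ge0 p (v : vec p) : 0 <= norm2 v.
Proof. exact: sqrtr_ge0. Qed.

Lemma sqnorm2_distC p (u v : vec p) : sqnorm2 (u - v) = sqnorm2 (v - u).
Proof. by apply: eq_bigr => i _; rewrite !mxE -sqrrN opprB. Qed.

Lemma ler_norm_sqr (a b : R) : 0 <= b -> a ^+ 2 <= b ^+ 2 -> `|a| <= b.
Proof.
move=> b0 ab; rewrite -sqrtr_sqr -[b]ger0_norm // -sqrtr_sqr.
by rewrite ler_sqrt // sqr_ge0.
Qed.

Lemma sqr_entry_le_sqnorm2 p (v : vec p) i : v i 0 ^+ 2 <= sqnorm2 v.
Proof. by rewrite /sqnorm2 (bigD1 i) //= lerDl sumr_ge0 // => j _; apply: sqr_ge0. Qed.

Lemma norm_entry_le_norm2 p (v : vec p) i : `|v i 0| <= norm2 v.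
Proof.
by apply: ler_norm_sqr; rewrite ?norm2_ge0 // norm2_sqr sqr_entry_le_sqnorm2.
Qed.

Lemma norm2_le_sup p (v : vec p) B : 0 <= B -> (forall i, `|v i 0| <= B) ->
  norm2 v <= p%:R * B.
Proof.
move=> B0 vB; rewrite -ler_sqr ?nnegrE ?norm2_ge0 ?mulr_ge0 // norm2_sqr.
apply: le_trans (_ : \sum_(i < p) B ^+ 2 <= _).
  apply: ler_sum => i _.
  by rewrite -real_normK ?num_real // ler_sqr ?nnegrE.
rewrite sumr_const card_ord -mulr_natl.
case: p {v vB} => [|p]; first by rewrite !mul0r expr0n.
have : 1 <= p.+1%:R :> R by rewrite ler1n.
nra.
Qed.

Lemma norm2Z p c (v : vec p) : norm2 (c *: v) = `|c| * norm2 v.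
Proof.
rewrite /norm2 -sqrtr_sqr -sqrtrM ?sqr_ge0 // mulr_sumr.
by congr (Num.sqrt _); apply: eq_bigr => i _; rewrite mxE exprMn.
Qed.

Lemma norm2_ball p (v : vec p) r : norm2 v <= r ->
  exists b : vec p, norm2 b <= 1 /\ v = r *: b.
Proof.
move=> vr; have [r0|r_neq0] := eqVneq r 0.
  exists 0; split; first by rewrite /norm2 big1 ?sqrtr0 // => i _; rewrite mxE expr0n.
  apply/matrixP => i j; rewrite (ord1 j) r0 scale0r mxE; apply/eqP.
  by rewrite -normr_le0 -r0 (le_trans (norm_entry_le_norm2 _ _)).
have r_gt0 : 0 < r by rewrite lt_def r_neq0 (le_trans (norm2_ge0 v) vr).
exists (r^-1 *: v); split; last by rewrite scalerA mulfV // scale1r.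
by rewrite norm2Z gtr0_norm ?invr_gt0 // mulrC ler_pdivrMr // mul1r.
Qed.

Lemma sqnorm2_sub_le p (u v : vec p) d : (forall i, `|u i 0 - v i 0| <= d) ->
  sqnorm2 u - sqnorm2 v <= d * \sum_i (2 * `|u i 0| + d).
Proof.
move=> uv; rewrite /sqnorm2 -sumrB mulr_sumr; apply: ler_sum => i _.
have := uv i; set a := u i 0; set w := a - v i 0 => wd.
have -> : v i 0 = a - w by rewrite /w opprB addrC subrK.
have aw : a * w <= `|a| * d.
  by apply: le_trans (ler_norm _) _; rewrite normrM ler_wpM2l.
have : `|w| ^+ 2 = w ^+ 2 by rewrite real_normK ?num_real.
have := normr_ge0 w; have := normr_ge0 a; nra.
Qed.

Lemma norm1_ge0 p (v : vec p) : 0 <= norm1 v.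
Proof. exact: sumr_ge0. Qed.

Lemma norm1D p (u v : vec p) : norm1 (u + v) <= norm1 u + norm1 v.
Proof. by rewrite /norm1 -big_split; apply: ler_sum => i _; rewrite mxE ler_normD. Qed.

Lemma norm1_mulmx_le p q (B : 'M[R]_(p, q)) (v : vec q) b :
  (forall i, `|v i 0| <= b) -> norm1 (B *m v) <= (\sum_j \sum_i `|B j i|) * b.
Proof.
move=> vb; rewrite /norm1 mulr_suml; apply: ler_sum => j _.
rewrite mxE mulr_suml; apply: le_trans (ler_norm_sum _ _ _) _.
by apply: ler_sum => i _; rewrite normrM ler_wpM2l.
Qed.

End Norms.

Section Lasso.
Variables (R : realType) (m n k : nat) (A : 'M[R]_(m, n)) (W : 'M[R]_(k, n)).
Variable alpha : R.
Hypothesis alpha_gt0 : 0 < alpha.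
Local Notation vec n := 'cV[R]_n.
Local Notation F := (objective A W alpha).
Local Notation minimizer := (minimizers A W alpha).

Lemma objectiveE y x : F y x = sqnorm2 (A *m x - y) + alpha * norm1 (W *m x).
Proof. by rewrite /objective norm2_sqr. Qed.

Lemma objective_ge0 y x : 0 <= F y x.
Proof. by rewrite objectiveE addr_ge0 ?sqnorm2_ge0 ?mulr_ge0 ?norm1_ge0 ?ltW. Qed.

Definition midpoint (x x' : vec n) : vec n := 2^-1 *: (x + x').

Lemma objective_midpoint y x x' :
  F y (midpoint x x') <= (F y x + F y x') / 2 - sqnorm2 (A *m (x - x')) / 4.
Proof.
have mulmx_mid p (B : 'M[R]_(p, n)) i :
    (B *m midpoint x x') i 0 = 2^-1 * ((B *m x) i 0 + (B *m x') i 0).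
  by rewrite /midpoint -scalemxAr mulmxDr !mxE.
have sq_mid : sqnorm2 (A *m midpoint x x' - y) =
    (sqnorm2 (A *m x - y) + sqnorm2 (A *m x' - y)) / 2 - sqnorm2 (A *m (x - x')) / 4.
  rewrite /sqnorm2 -big_split /= !mulr_suml -sumrB; apply: eq_bigr => i _.
  by rewrite mulmxBr !entryB !mulmx_mid; field.
have l1_mid : norm1 (W *m midpoint x x') <= (norm1 (W *m x) + norm1 (W *m x')) / 2.
  rewrite /norm1 -big_split /= mulr_suml; apply: ler_sum => i _.
  rewrite mulmx_mid normrM ger0_norm ?invr_ge0 // mulrC ler_wpM2r ?invr_ge0 //.
  exact: ler_normD.
have := ler_wpM2l (ltW alpha_gt0) l1_mid.
by rewrite !objectiveE sq_mid; lra.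
Qed.

Lemma residual_exchange (y y' : vec m) (x x' : vec n) :
  sqnorm2 (A *m x' - y) - sqnorm2 (A *m x - y) + sqnorm2 (A *m x - y')
    - sqnorm2 (A *m x' - y') <= sqnorm2 (A *m (x - x')) / 2 + 2 * sqnorm2 (y - y').
Proof.
rewrite /sqnorm2 -sumrB -big_split /= -sumrB mulr_suml mulr_sumr -big_split /=.
apply: ler_sum => i _; rewrite mulmxBr !entryB.
set a := (A *m x) i 0; set b := (A *m x') i 0; set u := y i 0; set v := y' i 0.
rewrite -subr_ge0.
have -> : (a - b) ^+ 2 / 2 + 2 * (u - v) ^+ 2 -
    ((b - u) ^+ 2 - (a - u) ^+ 2 + (a - v) ^+ 2 - (b - v) ^+ 2) =
    ((a - b) - 2 * (u - v)) ^+ 2 / 2 by field.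
by rewrite divr_ge0 ?sqr_ge0.
Qed.

Lemma minimizers_image_close y y' x x' : minimizer y x -> minimizer y' x' ->
  forall i, `|(A *m x) i 0 - (A *m x') i 0| <= 2 * norm2 (y - y').
Proof.
move=> xmin x'min i.
have mid_sym : midpoint x' x = midpoint x x' by rewrite /midpoint addrC.
have := objective_midpoint y' x' x; rewrite mid_sym !mulmxBr sqnorm2_distC.
have := x'min (midpoint x x'); have := objective_midpoint y x x'.
have := xmin (midpoint x x'); have := residual_exchange y y' x x'.
rewrite !mulmxBr !objectiveE => h1 h2 h3 h4 h5.
have close : sqnorm2 (A *m x - A *m x') <= 4 * sqnorm2 (y - y') by lra.
apply: ler_norm_sqr; first by rewrite mulr_ge0 ?norm2_ge0.
rewrite -entryB exprMn norm2_sqr.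
by have := sqr_entry_le_sqnorm2 (A *m x - A *m x') i; lra.
Qed.

Definition row_dir (i : 'I_m) : vec n := (row i A)^T.

Definition sign_dir (s : {ffun 'I_k -> bool}) : vec n :=
  W^T *m \col_j (if s j then 1 else -1).

Lemma dot_row_dir i x : dot (row_dir i) x = (A *m x) i 0.
Proof. by rewrite /dot [RHS]mxE; apply: eq_bigr => j _; rewrite !mxE. Qed.

Lemma dot_sign_dir s x :
  dot (sign_dir s) x = \sum_j (if s j then 1 else -1) * (W *m x) j 0.
Proof.
rewrite /dot; under eq_bigr do rewrite mxE mulr_suml.
rewrite exchange_big /=; apply: eq_bigr => j _; rewrite [(W *m x) j 0]mxE mulr_sumr.
by apply: eq_bigr => i _; rewrite !mxE mulrCA mulrA.
Qed.

(** The polyhedron [{x | A x = p, ||W x||_1 <= c}]: besides the two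
    inequalities for each row of [A], the l1 constraint is the family of the
    [2^k] inequalities [\sum_j s_j (W x)_j <= c] over all sign vectors [s]. *)
Definition level_dirs : seq (vec n) :=
  [seq row_dir i | i <- enum 'I_m] ++ [seq - row_dir i | i <- enum 'I_m] ++
  [seq sign_dir s | s <- enum {ffun 'I_k -> bool}].

Definition level_sys (p : vec m) (c : R) : seq (vec n * R) :=
  [seq (row_dir i, p i 0) | i <- enum 'I_m] ++
  [seq (- row_dir i, - p i 0) | i <- enum 'I_m] ++
  [seq (sign_dir s, c) | s <- enum {ffun 'I_k -> bool}].

Lemma level_sys_dirs p c d : d \in level_sys p c -> d.1 \in level_dirs.
Proof.
by rewrite !mem_cat => /or3P [] /mapP [i _ ->] /=; apply/or3P;
  [apply: Or31|apply: Or32|apply: Or33]; by apply/mapP; exists i; rewrite ?mem_enum.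
Qed.

Lemma solves_level_sys (p : vec m) c (x : vec n) e :
  (forall i, `|(A *m x) i 0 - p i 0| <= e) ->
  norm1 (W *m x) <= c + e -> solves (level_sys p c) x e.
Proof.
move=> Axp Wxc d; rewrite !mem_cat => /or3P [] /mapP [i _ ->] /=.
- by rewrite dot_row_dir; have := Axp i; rewrite ler_distl => /andP [].
- by rewrite dotNl dot_row_dir; have := Axp i; rewrite ler_distl; lra.
- rewrite dot_sign_dir; apply: le_trans Wxc; apply: ler_sum => j _.
  by case: (i j); rewrite ?mul1r ?mulN1r ?ler_norm // -normrN ler_norm.
Qed.

Lemma level_sys_exact (p : vec m) c (x : vec n) : solves (level_sys p c) x 0 ->
  A *m x = p /\ norm1 (W *m x) <= c.
Proof.
move=> xsol; split.
  apply/matrixP => i j; rewrite (ord1 j); apply/le_anti/andP; split.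
    have := xsol (row_dir i, p i 0); rewrite /= dot_row_dir addr0; apply.
    by rewrite mem_cat map_f ?mem_enum.
  have := xsol (- row_dir i, - p i 0); rewrite /= dotNl dot_row_dir addr0 lerN2.
  by apply; rewrite !mem_cat map_f ?mem_enum ?orbT.
pose s := [ffun j => 0 <= (W *m x) j 0].
have := xsol (sign_dir s, c); rewrite /= dot_sign_dir addr0.
have -> : \sum_j (if s j then 1 else -1) * (W *m x) j 0 = norm1 (W *m x).
  apply: eq_bigr => j _; rewrite ffunE; case: ifP => Wxj.
    by rewrite mul1r ger0_norm.
  by rewrite mulN1r ltr0_norm // ltNge Wxj.
by apply; rewrite !mem_cat map_f ?mem_enum ?orbT.
Qed.

Lemma level_sys_self x : solves (level_sys (A *m x) (norm1 (W *m x))) x 0.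
Proof. by apply: solves_level_sys => [i|]; rewrite ?addr0 // subrr normr0. Qed.

Lemma minimizers_level y xs x : minimizer y xs ->
  A *m x = A *m xs -> norm1 (W *m x) <= norm1 (W *m xs) -> minimizer y x.
Proof.
move=> xsmin Ax Wx z; apply: le_trans (xsmin z).
by rewrite !objectiveE Ax lerD2l ler_pM2l.
Qed.

Section Existence.
Variables (y : vec m) (mm : R).
Hypothesis mm_lb : forall z, mm <= F y z.
Hypothesis mm_approx : forall eps, 0 < eps -> exists x, F y x < mm + eps.

Lemma near_min_image_close x x' d d' : 0 <= d -> 0 <= d' ->
  F y x <= mm + d ^+ 2 -> F y x' <= mm + d' ^+ 2 ->
  forall i, `|(A *m x) i 0 - (A *m x') i 0| <= 2 * (d + d').
Proof.
move=> d0 d'0 xd x'd i.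
have := mm_lb (midpoint x x'); have := objective_midpoint y x x'.
rewrite mulmxBr => h1 h2.
have gap : sqnorm2 (A *m x - A *m x') <= 2 * (d ^+ 2 + d' ^+ 2) by lra.
have := sqr_entry_le_sqnorm2 (A *m x - A *m x') i; rewrite entryB => h3.
by apply: ler_norm_sqr; [rewrite mulr_ge0 ?addr_ge0|nra].
Qed.

Lemma near_min_image_limit : exists p : vec m, forall x d, 0 < d ->
  F y x <= mm + d ^+ 2 -> forall i, `|(A *m x) i 0 - p i 0| <= 2 * d.
Proof.
pose S i := [set r | exists x d, [/\ 0 < d, F y x <= mm + d ^+ 2
                                  & r = (A *m x) i 0 - 2 * d]]%classic.
have S_bound i x d : 0 < d -> F y x <= mm + d ^+ 2 ->
    (A *m x) i 0 - 2 * d <= sup (S i) <= (A *m x) i 0 + 2 * d.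
  move=> d0 xd; have S0 : (S i !=set0)%classic by exists ((A *m x) i 0 - 2 * d), x, d.
  have Sub : ubound (S i) ((A *m x) i 0 + 2 * d).
    move=> _ [x' [d' [d'0 x'd ->]]].
    have := near_min_image_close (ltW d0) (ltW d'0) xd x'd i.
    by rewrite ler_norml; lra.
  rewrite ge_sup // andbT; apply: sup_upper_bound; last by exists x, d.
  by split => //; exists ((A *m x) i 0 + 2 * d).
exists (\col_i sup (S i)) => x d d0 xd i; rewrite [X in `|_ - X|]mxE ler_distl.
by have := S_bound i _ _ d0 xd; lra.
Qed.

Variable p : vec m.
Hypothesis p_lim : forall x d, 0 < d -> F y x <= mm + d ^+ 2 ->
  forall i, `|(A *m x) i 0 - p i 0| <= 2 * d.

(* the l1 budget for which [F y x = mm] when [A x = p] and [||W x||_1 = c] *)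
Local Notation c := ((mm - sqnorm2 (p - y)) / alpha).

Lemma level_sys_approx e : 0 < e -> exists x, solves (level_sys p c) x e.
Proof.
move=> e0; pose Q := \sum_i (2 * `|p i 0 - y i 0| + 2).
have Q0 : 0 <= Q by apply: sumr_ge0 => i _; rewrite addr_ge0 ?mulr_ge0.
pose G := 2 + (1 + 2 * Q) / alpha.
have G2 : 2 <= G by rewrite lerDl divr_ge0 ?ltW //; lra.
pose d := Order.min 1 (e / G).
have d0 : 0 < d by rewrite lt_min ltr01 divr_gt0 //; lra.
have d1 : d <= 1 by rewrite ge_min lexx.
have dG : d * G <= e by rewrite -ler_pdivlMr 1?ge_min ?lexx ?orbT //; lra.
have [x xd] := mm_approx (exprn_gt0 2 d0).
have Axp := p_lim d0 (ltW xd).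
have gap : sqnorm2 (p - y) - sqnorm2 (A *m x - y) <= 2 * d * Q.
  apply: le_trans (sqnorm2_sub_le (d := 2 * d) _) _.
    by move=> i; rewrite !entryB opprB addrA subrK distrC.
  apply: ler_wpM2l; first by rewrite mulr_ge0 ?ltW.
  by apply: ler_sum => i _; rewrite entryB lerD2l; lra.
exists x; apply: solves_level_sys.
  by move=> i; apply: le_trans (Axp i) _; nra.
rewrite -(ler_pM2l alpha_gt0) mulrDr mulrCA mulfV ?gt_eqF // mulr1.
have dGe : alpha * (d * G) <= alpha * e by rewrite ler_pM2l.
have dGE : alpha * (d * G) = 2 * alpha * d + d * (1 + 2 * Q).
  by rewrite /G; field; rewrite gt_eqF.
have dd : d ^+ 2 <= d by nra.
have ad0 : 0 <= alpha * d by rewrite mulr_ge0 ?ltW.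
by move: xd; rewrite objectiveE; lra.
Qed.

Lemma minimizer_of_level x : solves (level_sys p c) x 0 -> minimizer y x.
Proof.
move=> /level_sys_exact [Axp Wxc] z; apply: le_trans (mm_lb z).
rewrite objectiveE Axp.
have := ler_wpM2l (ltW alpha_gt0) Wxc.
by rewrite mulrCA mulfV ?gt_eqF // mulr1; lra.
Qed.

End Existence.

Lemma exists_minimizer y : exists x, minimizer y x.
Proof.
pose mm := inf (range (F y)).
have Fy_lb : has_lbound (range (F y)) by exists 0 => _ [x _ <-]; apply: objective_ge0.
have Fy_inf : has_inf (range (F y)) by split => //; exists (F y 0), 0.
have mm_lb z : mm <= F y z by apply: ge_inf; last exists z.
have mm_approx eps : 0 < eps -> exists x, F y x < mm + eps.
  by move=> eps0; have [_ [x _ <-]] := inf_adherent eps0 Fy_inf; exists x.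
have [p p_lim] := near_min_image_limit mm_lb.
have [K [_ HK]] := hoffman_bound level_dirs.
have [x0 x0sol] := level_sys_approx mm_approx p_lim ltr01.
have [x [xsol _]] := HK _ (@level_sys_dirs _ _) (level_sys_approx mm_approx p_lim)
  x0 1 ler01 x0sol.
by exists x; apply: minimizer_of_level xsol.
Qed.

Lemma minimizer_l1_excess : exists C, 0 <= C /\ forall y yt xs xt,
  minimizer y xs -> minimizer yt xt ->
  norm1 (W *m xt) <= norm1 (W *m xs) + C * norm2 (y - yt).
Proof.
have [K [K0 HK]] := hoffman_bound level_dirs.
pose NW := \sum_j \sum_i `|W j i|.
have NW0 : 0 <= NW by apply: sumr_ge0 => j _; apply: sumr_ge0.
exists (NW * (K * 2)); split; first by rewrite !mulr_ge0.
move=> y yt xs xt xsmin xtmin; pose dl := norm2 (y - yt); pose d := xt - xs.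
have dl0 : 0 <= 2 * dl by rewrite mulr_ge0 ?norm2_ge0.
have zero_sol : solves (level_sys (A *m d) (norm1 (W *m d))) 0 (2 * dl).
  apply: solves_level_sys => [i|].
    rewrite mulmx0 mxE sub0r normrN mulmxBr entryB distrC.
    exact: minimizers_image_close.
  rewrite mulmx0 [norm1 0]big1 ?addr_ge0 ?norm1_ge0 // => i _.
  by rewrite mxE normr0.
have [d' [d'sol d'near]] :=
  HK _ (@level_sys_dirs _ _) (solves_approx (@level_sys_self d)) 0 _ dl0 zero_sol.
have [Ad' _] := level_sys_exact d'sol.
have := xtmin (xs + d'); rewrite !objectiveE mulmxDr Ad' -mulmxDr [xs + d]addrC subrK.
rewrite lerD2l ler_pM2l // mulmxDr => /le_trans; apply.
apply: le_trans (norm1D _ _) _; rewrite lerD2l.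
have d'_small i : `|d' i 0| <= K * (2 * dl) by have := d'near i; rewrite mxE subr0.
by apply: le_trans (norm1_mulmx_le W d'_small) _; rewrite !mulrA.
Qed.

Lemma minimizers_near : exists K, 0 <= K /\ forall y yt xt, minimizer yt xt ->
  exists x, minimizer y x /\ forall i, `|xt i 0 - x i 0| <= K * norm2 (y - yt).
Proof.
have [C [C0 HC]] := minimizer_l1_excess.
have [K [K0 HK]] := hoffman_bound level_dirs.
exists (K * (2 + C)); split; first by rewrite mulr_ge0 // addr_ge0.
move=> y yt xt xtmin; have [xs xsmin] := exists_minimizer y.
have dl0 := norm2_ge0 (y - yt).
have xtsol : solves (level_sys (A *m xs) (norm1 (W *m xs))) xt
                    ((2 + C) * norm2 (y - yt)).
  apply: solves_level_sys => [i|].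
    rewrite distrC; apply: le_trans (minimizers_image_close xsmin xtmin i) _.
    by rewrite ler_wpM2r // lerDl.
  apply: le_trans (HC _ _ _ _ xsmin xtmin) _.
  by rewrite lerD2l ler_wpM2r // lerDr.
have [x [xsol xnear]] :=
  HK _ (@level_sys_dirs _ _) (solves_approx (@level_sys_self xs))
    xt _ (mulr_ge0 (addr_ge0 (ler0n R 2) C0) dl0) xtsol.
have [Ax Wx] := level_sys_exact xsol.
exists x; split; first exact: minimizers_level xsmin Ax Wx.
by move=> i; rewrite distrC -mulrA xnear.
Qed.

End Lasso.

Theorem proposition1 (R : realType) (m n k : nat) (A : 'M[R]_(m, n))
  (W : 'M[R]_(k, n)) (alpha : R) (halpha : 0 < alpha) :
  exists kappa : R, 0 < kappa /\
    forall (y yt : 'cV[R]_m) (xt : 'cV[R]_n),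
      minimizers A W alpha yt xt ->
      exists (x b : 'cV[R]_n),
        minimizers A W alpha y x /\ norm2 b <= 1 /\
        xt = x + (kappa * norm2 (y - yt)) *: b.
Proof.
have [K [K0 HK]] := minimizers_near A W halpha.
pose kappa := n%:R * K + 1.
exists kappa; split; first by rewrite ltr_pwDr // mulr_ge0.
move=> y yt xt xtmin; have [x [xmin xnear]] := HK y yt xt xtmin.
have xt_near : norm2 (xt - x) <= kappa * norm2 (y - yt).
  have dl0 := norm2_ge0 (y - yt).
  apply: le_trans (norm2_le_sup (mulr_ge0 K0 dl0) _) _.
    by move=> i; rewrite entryB xnear.
  by rewrite mulrA ler_wpM2r // lerDl.
have [b [b1 xtx]] := norm2_ball xt_near.
by exists x, b; rewrite -xtx addrC subrK.
Qed.
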